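(* Let $b>1$ be an integer, let $n=b+1$, and consider the 2-connected $(3,b)$-puzzle on $V=\{1,\dots,n\}$, i.e. the cycle set consisting of the two cycles $\alpha=(1\ 2\ 3)$ and $\beta=(2\ 3\ 4\ \dots\ n)$. Then any even permutation of $V$ can be generated in $O(n^2)$ shifts; that is, there is an absolute constant $K$ (independent of $b$) such that every even permutation of $V$ is a product of at most $Kn^2$ factors, each of which is one of $\alpha,\alpha^{-1},\beta,\beta^{-1}$.
   Context: Permutations are written in cycle notation. A shift along a cycle $(v_1\ \dots\ v_j)$ corresponds to applying the permutation $(v_1\ \dots\ v_j)$ or its inverse to the tokens placed on the vertices of $V$. *)

From mathcomp Require Import all_boot all_fingroup.
Set Implicit Arguments. Unset Strict Implicit. Unset Printing Implicit Defensive.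

(* If c has duplicates we return the identity (never used below). *)
Definition cycle_fun (T : finType) (c : seq T) (x : T) : T :=
  if uniq c then next c x else x.

Lemma cycle_fun_inj (T : finType) (c : seq T) : injective (cycle_fun c).
Proof.
rewrite /cycle_fun; case U: (uniq c) => x y //.
exact: (can_inj (prev_next U)).
Qed.

Definition cycle_perm (T : finType) (c : seq T) : {perm T} :=
  perm (@cycle_fun_inj T c).

(* V = {1,...,n} with n = b+1 is modelled by 'I_(b.+1) = {0,...,b};
   vertex k corresponds to ordinal k-1. *)
Definition alpha (b : nat) : {perm 'I_b.+1} :=
  cycle_perm [:: inord 0; inord 1; inord 2].
Definition beta (b : nat) : {perm 'I_b.+1} :=
  cycle_perm [seq (inord i : 'I_b.+1) | i <- iota 1 b].

Definition shifts (b : nat) : seq {perm 'I_b.+1} :=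
  [:: alpha b; (alpha b)^-1; beta b; (beta b)^-1]%g.

From mathcomp Require Import all_boot all_fingroup zify.

(* Vertices are numbered 0..b, so alpha = (0 1 2) and beta = (1 2 ... b).
   Conjugating alpha by beta^(k-2) gives the 3-cycle gamma k = (0 k-1 k) at a
   cost of at most 2b shifts.  For 2 <= m <= b and y < m, either gamma m or
   gamma m * gamma (y+1) is an even permutation of {0..m} sending m to y.
   Composing an even permutation s of {0..m} with the inverse of such a mover
   for y = s m fixes m, so s is peeled off from the top at 4b shifts per
   point; what is left is an even permutation of {0,1}, hence the identity.
   Altogether at most 4b^2 <= 4n^2 shifts suffice. *)
Set Implicit Arguments. Unset Strict Implicit. Unset Printing Implicit Defensive.
Import GroupScope.

Section CayleyBall.
Variables (gT : finGroupType) (S : seq gT).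

Definition in_ball (k : nat) (g : gT) : Prop :=
  exists w : seq gT, [/\ all (fun h => h \in S) w, size w <= k & g = \prod_(h <- w) h].

Lemma in_ball_le k l g : k <= l -> in_ball k g -> in_ball l g.
Proof. by move=> kl [w [Sw wk ->]]; exists w; split=> //; apply: leq_trans kl. Qed.

Lemma in_ball1 : in_ball 0 1.
Proof. by exists [::]; rewrite big_nil. Qed.

Lemma in_ball_gen g : g \in S -> in_ball 1 g.
Proof. by move=> Sg; exists [:: g]; rewrite /= Sg big_seq1. Qed.

Lemma in_ballM k l g h : in_ball k g -> in_ball l h -> in_ball (k + l) (g * h).
Proof.
move=> [w [Sw wk ->]] [v [Sv vl ->]]; exists (w ++ v).
by rewrite all_cat Sw Sv size_cat leq_add // big_cat.
Qed.

Lemma in_ballX k n g : in_ball k g -> in_ball (n * k) (g ^+ n).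
Proof.
move=> Bg; elim: n => [|n IHn]; first exact: in_ball1.
by rewrite expgS mulSn; apply: in_ballM.
Qed.

Hypothesis S_invg : {in S, forall g, g^-1 \in S}.

Lemma in_ballV k g : in_ball k g -> in_ball k g^-1.
Proof.
move=> [w [Sw wk ->]]; exists (rev (map (fun h => h^-1) w)); split.
- by rewrite all_rev all_map; apply/allP => h /(allP Sw) /S_invg.
- by rewrite size_rev size_map.
elim: w {Sw wk} => [|h w IHw]; first by rewrite big_nil invg1.
by rewrite /= rev_cons -cats1 big_cat big_seq1 -IHw big_cons invMg.
Qed.

Lemma in_ballJ k l g h : in_ball k g -> in_ball l h -> in_ball (l + k + l) (g ^ h).
Proof. move=> Bg Bh; rewrite conjgE mulgA; apply: in_ballM (in_ballM (in_ballV Bh) Bg) Bh. Qed.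

End CayleyBall.

Section CyclePerm.
Variable T : finType.
Implicit Types (c : seq T) (x y z : T).

Lemma cycle_perm_on c : perm_on [set x in c] (cycle_perm c).
Proof.
apply/subsetP => x; rewrite !inE /cycle_perm permE /cycle_fun next_nth.
by case: (uniq c); case: (x \in c); rewrite ?eqxx.
Qed.

Lemma cycle_perm_nth x0 c i :
  uniq c -> i.+1 < size c -> cycle_perm c (nth x0 c i) = nth x0 c i.+1.
Proof.
move=> Uc ltic; rewrite /cycle_perm permE /cycle_fun Uc next_nth mem_nth 1?ltnW //.
by case: c Uc ltic => // x c Uc ltic; rewrite index_uniq 1?ltnW //= (set_nth_default x0).
Qed.

Lemma cycle_perm_last x c : uniq (x :: c) -> cycle_perm (x :: c) (last x c) = x.
Proof.
move=> Uc; rewrite -[last x c]/(last x (x :: c)) -nth_last.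
rewrite /cycle_perm permE /cycle_fun Uc next_nth mem_nth //.
by rewrite index_uniq //= nth_default.
Qed.

Lemma cycle_permJ c (w : {perm T}) : cycle_perm c ^ w = cycle_perm (map w c).
Proof.
apply/permP => x; rewrite -(permKV w x) permJ /cycle_perm permE [RHS]permE /cycle_fun.
by rewrite (map_inj_uniq perm_inj); case: ifP => // Uc; rewrite next_map //; apply: perm_inj.
Qed.

Lemma cycle_perm3 x y z :
  uniq [:: x; y; z] -> cycle_perm [:: x; y; z] = tperm x y * tperm x z.
Proof.
move=> Uxyz; have := Uxyz; rewrite /= !inE negb_or => /and3P[/andP[nxy nxz] nyz _].
apply/permP => u; rewrite permM.
have [|nu] := boolP (u \in [:: x; y; z]); last first.
  have [nxu nyu nzu] : [/\ x != u, y != u & z != u].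
    by move: nu; rewrite !inE !negb_or ![u == _]eq_sym => /and3P.
  by rewrite !tpermD // (out_perm (cycle_perm_on _)) // inE.
rewrite !inE => /or3P[] /eqP->.
- by rewrite (cycle_perm_nth x Uxyz (i := 0)) // tpermL tpermD // eq_sym.
- by rewrite (cycle_perm_nth x Uxyz (i := 1)) // tpermR tpermL.
- by rewrite (cycle_perm_last Uxyz) (tpermD nxz nyz) tpermR.
Qed.

Lemma odd_cycle_perm3 x y z : uniq [:: x; y; z] -> odd_perm (cycle_perm [:: x; y; z]) = false.
Proof.
move=> Uxyz; have := Uxyz; rewrite /= !inE negb_or => /and3P[/andP[nxy nxz] _ _].
by rewrite cycle_perm3 // odd_permM !odd_tperm nxy nxz.
Qed.

Lemma perm_on_pair_even x y (s : {perm T}) :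
  perm_on [set x; y] s -> ~~ odd_perm s -> s = 1.
Proof.
have fix_x_id t : perm_on [set x; y] t -> t x = x -> t = 1.
  move=> Ht tx; apply: (@perm_on_id _ _ [set y]); last by rewrite cards1.
  apply/subsetP => u.
  rewrite !inE => tu; have := subsetP Ht u; rewrite !inE tu => /(_ isT) /orP[] //.
  by move/eqP=> ux; rewrite ux tx eqxx in tu.
move=> Hs even_s; have [sx|sx] := eqVneq (s x) x; first exact: fix_x_id.
have sxy : s x = y.
  by have := perm_closed x Hs; rewrite !inE eqxx orTb (negbTE sx) => /eqP.
have nxy : x != y by rewrite -sxy eq_sym.
have : s * tperm x y = 1 by apply: fix_x_id; rewrite ?perm_onM ?tperm_on // permM sxy tpermR.
move/(canRL (mulgK _)); rewrite mul1g tpermV => s_tperm.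
by move: even_s; rewrite s_tperm odd_tperm nxy.
Qed.
End CyclePerm.

Section Puzzle.
Variable b : nat.
Hypothesis b_gt1 : 1 < b.
Local Notation pt i := (inord i : 'I_b.+1).
Local Notation ball := (in_ball (shifts b)).

Lemma eq_pt i j : i <= b -> j <= b -> (pt i == pt j) = (i == j).
Proof.
move=> lt_ib lt_jb; apply/eqP/eqP => [eq_ij|->] //.
by rewrite -(inordK lt_ib) -(inordK lt_jb) eq_ij.
Qed.

Lemma shifts_invg : {in shifts b, forall g, g^-1 \in shifts b}.
Proof. by move=> g; rewrite !inE => /or4P[] /eqP->; rewrite ?invgK eqxx ?orbT. Qed.

Lemma alpha_in_ball : ball 1 (alpha b).
Proof. by apply: in_ball_gen; rewrite mem_head. Qed.

Lemma beta_in_ball : ball 1 (beta b).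
Proof. by apply: in_ball_gen; rewrite !inE eqxx ?orbT. Qed.

Lemma alpha_uniq : uniq [:: pt 0; pt 1; pt 2].
Proof. by rewrite /= !inE !eq_pt //; apply: ltnW. Qed.

Lemma beta_uniq : uniq (map (fun i => pt i) (iota 1 b)).
Proof.
rewrite map_inj_in_uniq ?iota_uniq // => i j; rewrite !mem_iota add1n !ltnS.
by move=> /andP[_ le_ib] /andP[_ le_jb] /eqP; rewrite eq_pt // => /eqP.
Qed.

Lemma beta_pt0 : beta b (pt 0) = pt 0.
Proof.
rewrite (out_perm (cycle_perm_on _)) // inE; apply/mapP => -[i].
by rewrite mem_iota => /andP[i_gt0 le_ib] /eqP; rewrite eq_pt // eq_sym gtn_eqF.
Qed.

Lemma beta_ptS i : 0 < i < b -> beta b (pt i) = pt i.+1.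
Proof.
case/andP=> i_gt0 lt_ib; have nth_beta j : j < b ->
    nth (pt 0) (map (fun i => pt i) (iota 1 b)) j = pt j.+1.
  by move=> lt_jb; rewrite (nth_map 0) ?size_iota // nth_iota.
have {1}-> : pt i = nth (pt 0) (map (fun i => pt i) (iota 1 b)) i.-1.
  by rewrite nth_beta ?prednK //; lia.
by rewrite cycle_perm_nth ?beta_uniq ?prednK ?nth_beta ?size_map ?size_iota.
Qed.

Lemma betaX_pt j i : 0 < i -> i + j <= b -> (beta b ^+ j) (pt i) = pt (i + j).
Proof.
move=> i_gt0; elim: j => [|j IHj] le_ijb; first by rewrite expg0 perm1 addn0.
by rewrite expgSr permM IHj ?beta_ptS ?addnS //; lia.
Qed.

Definition gamma k := alpha b ^ (beta b ^+ (k - 2)).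

Lemma gamma_uniq k : 2 <= k <= b -> uniq [:: pt 0; pt k.-1; pt k].
Proof. by move=> /andP[k_ge2 le_kb]; rewrite /= !inE !eq_pt //; lia. Qed.

Lemma gammaE k : 2 <= k <= b -> gamma k = cycle_perm [:: pt 0; pt k.-1; pt k].
Proof.
move=> /andP[k_ge2 le_kb]; rewrite /gamma /alpha cycle_permJ /=.
rewrite permX_fix ?beta_pt0 // !betaX_pt //; try lia.
by congr (cycle_perm [:: _; inord _; inord _]); lia.
Qed.

Lemma gamma_in_ball k : k <= b -> ball (2 * b) (gamma k).
Proof.
move=> le_kb; have := in_ballJ shifts_invg alpha_in_ball (in_ballX (k - 2) beta_in_ball).
by apply: in_ball_le; lia.
Qed.

Lemma odd_gamma k : odd_perm (gamma k) = false.
Proof. by rewrite odd_permJ odd_cycle_perm3 // alpha_uniq. Qed.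

Definition upto m := [set x : 'I_b.+1 | x <= m].

Lemma upto_subset i j : i <= j -> upto i \subset upto j.
Proof. by move=> le_ij; apply/subsetP => x; rewrite !inE => /leq_trans; apply. Qed.

Lemma gamma_on k : 2 <= k <= b -> perm_on (upto k) (gamma k).
Proof.
move=> k_range; rewrite gammaE //; apply: subset_trans (cycle_perm_on _) _.
apply/subsetP => x; rewrite !inE => /or3P[] /eqP->; rewrite inordK //; lia.
Qed.

Lemma gamma_pt0 k : 2 <= k <= b -> gamma k (pt 0) = pt k.-1.
Proof.
by move=> k_range; rewrite gammaE // (cycle_perm_nth (pt 0) (gamma_uniq k_range) (i := 0)).
Qed.

Lemma gamma_pt k : 2 <= k <= b -> gamma k (pt k) = pt 0.
Proof. by move=> k_range; rewrite gammaE // (cycle_perm_last (gamma_uniq k_range)). Qed.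

Lemma even_mover_in_ball m y : 2 <= m <= b -> y < m ->
  exists2 d, ball (4 * b) d & [/\ d (pt m) = pt y, perm_on (upto m) d & ~~ odd_perm d].
Proof.
move=> m_range lt_ym; have le_mb : m <= b by case/andP: m_range.
have [-> | y_gt0] := posnP y.
  exists (gamma m); first by apply: in_ball_le (gamma_in_ball le_mb); lia.
  by rewrite gamma_pt // gamma_on // odd_gamma.
have y1_range : 2 <= y.+1 <= b by apply/andP; split; lia.
exists (gamma m * gamma y.+1).
  have := in_ballM (gamma_in_ball le_mb) (gamma_in_ball (leq_trans lt_ym le_mb)).
  by apply: in_ball_le; lia.
split; first by rewrite permM gamma_pt // gamma_pt0.
- by rewrite perm_onM ?gamma_on //; apply: subset_trans (gamma_on y1_range) (upto_subset _).
by rewrite odd_permM !odd_gamma.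
Qed.

Lemma perm_on_upto_fix m s : perm_on (upto m.+1) s -> s (pt m.+1) = pt m.+1 ->
  perm_on (upto m) s.
Proof.
move=> Hs s_fix; apply/subsetP => x sx; have := subsetP Hs x sx.
rewrite !inE leq_eqVlt ltnS => /orP[/eqP x_eq|] //.
have x_pt : x = pt m.+1 by rewrite -x_eq inord_val.
by move: sx; rewrite inE x_pt s_fix eqxx.
Qed.

Lemma even_on_upto1 m s : m <= 1 -> perm_on (upto m) s -> ~~ odd_perm s -> s = 1.
Proof.
move=> le_m1 Hs; apply: (@perm_on_pair_even _ (pt 0) (pt 1)); apply: subset_trans Hs _.
apply/subsetP => x; rewrite !inE -!val_eqE /= !inordK //; lia.
Qed.

Lemma even_in_ball m s : m <= b -> perm_on (upto m) s -> ~~ odd_perm s ->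
  ball (4 * b * m) s.
Proof.
elim: m s => [|m IHm] s le_mb Hs even_s.
  by rewrite (even_on_upto1 _ Hs even_s) //; apply: in_ball_le (in_ball1 _).
have [le_Sm1 | m_gt0] := leqP m.+1 1.
  by rewrite (even_on_upto1 le_Sm1 Hs even_s); apply: in_ball_le (in_ball1 _).
have pt_in : pt m.+1 \in upto m.+1 by rewrite inE inordK.
have := perm_closed (pt m.+1) Hs; rewrite pt_in inE leq_eqVlt => /orP[/eqP sm | lt_sm].
  have Hs_m : perm_on (upto m) s.
    by apply: (perm_on_upto_fix Hs); apply: val_inj; rewrite /= sm inordK.
  by apply: in_ball_le (IHm s (ltnW le_mb) Hs_m even_s); rewrite leq_mul2l ltnW ?orbT.
have [|d Bd [d_m Hd even_d]] := even_mover_in_ball (y := s (pt m.+1)) _ lt_sm.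
  by apply/andP; split; lia.
rewrite inord_val in d_m.
have Ht : perm_on (upto m) (s * d^-1).
  apply: perm_on_upto_fix; first by rewrite perm_onM ?perm_onV.
  by rewrite permM -d_m permK.
have even_t : ~~ odd_perm (s * d^-1).
  by rewrite odd_permM odd_permV (negbTE even_s) (negbTE even_d).
rewrite -(mulgKV d s) mulnS addnC; apply: in_ballM Bd.
exact: IHm (ltnW le_mb) Ht even_t.
Qed.

End Puzzle.

Theorem lemma1 :
  exists K : nat, forall b : nat, 1 < b ->
    forall s : {perm 'I_b.+1}, ~~ odd_perm s ->
      exists w : seq {perm 'I_b.+1},
        all (fun g => g \in shifts b) w /\
        size w <= K * (b.+1) ^ 2 /\
        s = (\prod_(g <- w) g)%g.
Proof.
exists 4 => b b_gt1 s even_s.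
have Hs : perm_on (upto b b) s by apply/subsetP => x _; rewrite inE -ltnS.
have [w [Sw size_w ->]] := even_in_ball b_gt1 (leqnn b) Hs even_s.
exists w; split=> //; split=> //; apply: leq_trans size_w _.
by rewrite -mulnA leq_mul2l leq_mul ?orbT.
Qed.
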